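(* Let $(G,I,O)$ be a geometry with $n = \lvert V(G)\rvert$ and $k = \lvert O \rvert$. If $(G,I,O)$ has a causal flow, then $\lvert E(G)\rvert \le kn - \binom{k+1}{2}$. Moreover, for any $n \ge k \ge 1$ and any integer partition $n_1 \le n_2 \le \cdots \le n_k$ of $n$ into positive parts, the geometry $(G,I,O)$ with $G = G(n_1,\ldots,n_k)$, $I = \{v_{i,1}\}_{i=1}^k$ and $O = \{v_{i,n_i}\}_{i=1}^k$ has a causal flow and satisfies $\lvert E(G)\rvert = kn - \binom{k+1}{2}$.
   Context: A geometry is a triple $(G,I,O)$ where $G$ is a finite simple undirected graph and $I, O \subseteq V(G)$ (not necessarily disjoint). Write $O^{\mathsf c} = V(G)\setminus O$, $I^{\mathsf c} = V(G) \setminus I$, and $x \sim y$ for adjacency in $G$. A causal flow on $(G,I,O)$ is a pair $(f,\preceq)$ with a function $f: O^{\mathsf c} \to I^{\mathsf c}$ and a partial order $\preceq$ on $V(G)$ such that for all $x \in O^{\mathsf c}$ and $y \in V(G)$: (1) $x \sim f(x)$; (2) $x \preceq f(x)$; (3) if $y \sim f(x)$ then $x \preceq y$. The graph $G(n_1,\ldots,n_k)$: for each $1 \le i \le k$ it contains a path $v_{i,1} v_{i,2} \cdots v_{i,n_i}$ on $n_i$ new vertices (edges $v_{i,a}v_{i,a+1}$ for $1 \le a < n_i$), and additionally, for each $1 \le i < j \le k$, the following edges: (i) if $n_i > 1$, the edge $v_{i,a}v_{j,a}$ for each $1 \le a < n_i$; (ii) if $n_j > 1$, the edge $v_{i,a+1}v_{j,a}$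 for each $1 \le a < n_i$; (iii) the edge $v_{i,n_i}v_{j,a}$ for each $n_i \le a \le n_j$. *)

From mathcomp Require Import all_boot.
Unset Printing Implicit Defensive.

Definition simple_graph {T : finType} (e : rel T) : Prop :=
  symmetric e /\ irreflexive e.

Definition edges {T : finType} (e : rel T) : {set {set T}} :=
  [set A : {set T} | [exists x, exists y, e x y && (A == [set x; y])]].

Definition partial_order {T : finType} (le : rel T) : Prop :=
  reflexive le /\ (forall x y, le x y -> le y x -> x = y) /\ transitive le.

(* (f, le) is a causal flow on (G,I,O); f is given as a total function on T
   but only its restriction to O^c is constrained (and must land in I^c). *)
Definition is_causal_flow {T : finType} (e : rel T) (I O : {set T})
    (f : T -> T) (le : rel T) : Prop :=
  partial_order le /\
  forall x, x \notin O ->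
    [/\ f x \notin I, e x (f x), le x (f x) & forall y, e y (f x) -> le x y].

Definition has_causal_flow {T : finType} (e : rel T) (I O : {set T}) : Prop :=
  exists (f : T -> T) (le : rel T), is_causal_flow e I O f le.

(* The graph G(n_1,...,n_k), for ns = [:: n_1; ...; n_k].
   Row indices i are 0-based ('I_k), positions a are 1-based: vertex
   v_{i,a} is the pair (i, a) with 1 <= a <= n_i. *)
Definition gvert_pred (ns : seq nat) (p : 'I_(size ns) * 'I_(sumn ns).+1) : bool :=
  (1 <= p.2) && (p.2 <= nth 0 ns p.1).

Definition gvert (ns : seq nat) := {p : 'I_(size ns) * 'I_(sumn ns).+1 | gvert_pred ns p}.

Definition row {ns : seq nat} (v : gvert ns) : nat := (val v).1.
Definition pos {ns : seq nat} (v : gvert ns) : nat := (val v).2.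

Definition gadj_dir {ns : seq nat} (x y : gvert ns) : bool :=
  let i := row x in let a := pos x in let j := row y in let b := pos y in
  let ni := nth 0 ns i in let nj := nth 0 ns j in
  ((i == j) && (b == a.+1))
  || ((i < j) &&
      [|| (* (i) v_{i,a} v_{j,a}, 1 <= a < n_i, if n_i > 1 *)
          [&& 1 < ni, a == b, 1 <= a & a < ni],
          (* (ii) v_{i,c+1} v_{j,c}, 1 <= c < n_i, if n_j > 1 *)
          [&& 1 < nj, a == b.+1, 1 <= b & b < ni]
        | (* (iii) v_{i,n_i} v_{j,c}, n_i <= c <= n_j *)
          [&& a == ni, ni <= b & b <= nj]]).

Definition gadj (ns : seq nat) : rel (gvert ns) :=
  fun x y => gadj_dir x y || gadj_dir y x.

Definition gI (ns : seq nat) : {set gvert ns} := [set v | pos v == 1].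
Definition gO (ns : seq nat) : {set gvert ns} := [set v | pos v == nth 0 ns (row v)].

From mathcomp Require Import all_boot zify.

(* Bound: induct on vertex sets S closed under f (for non-outputs), removing a
   minimal vertex v of S.  If v is an output it has at most |S| - 1 neighbours
   in S.  Otherwise a neighbour w <> f v of v is not of the form f x with x in
   S \ O, since v ~ f x forces x <= v, i.e. x = v; as f is injective on
   non-outputs, exactly |O :&: S| vertices of S are not of that form, v being
   one of them, so v has at most |O :&: S| neighbours.  Either way
   |E(S)| + C(|O :&: S| + 1, 2) <= |O :&: S| |S| is preserved.
   Construction: f moves v_{i,a} to v_{i,a+1}, and vertices are ordered by
   (a, i) lexicographically with all outputs on top.  Orienting every edge
   from the lower row (or along the path), row i carries n_i - 1 edges and
   rows i < j share n_i + n_j - 1, which add up to k n - C(k + 1, 2). *)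

Set Implicit Arguments.
Unset Strict Implicit.

Section EdgesWithin.
Variables (T : finType) (e : rel T).

Definition edges_within (S : {set T}) : {set {set T}} :=
  [set A in edges e | A \subset S].

Lemma edges_withinT : edges_within [set: T] = edges e.
Proof. by apply/setP => A; rewrite !inE subsetT andbT. Qed.

Lemma edges_within0 : edges_within set0 = set0.
Proof.
apply/setP => A; rewrite !inE; apply/negbTE/andP => -[/existsP[x /existsP[y]]].
by case/andP=> _ /eqP-> /subsetP/(_ x); rewrite !inE eqxx => /(_ isT).
Qed.

Hypothesis e_sym : symmetric e.

Lemma card_edges_withinD1 (S : {set T}) v : v \in S ->
  #|edges_within S| <= #|edges_within (S :\ v)| + #|[set w in S | e v w]|.
Proof.
move=> vS.
have sub : edges_within S \subset
    edges_within (S :\ v) :|: [set [set v; w] | w in [set w in S | e v w]].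
  apply/subsetP => A; rewrite !inE => /andP[eA AS].
  have [x [y [exy defA]]] : exists x y, e x y /\ A = [set x; y].
    by case/existsP: eA => x /existsP[y /andP[exy /eqP]]; exists x, y.
  have [vA|vA] := boolP (v \in A).
    apply/orP; right; apply/imsetP.
    move: vA; rewrite defA !inE => /orP[]/eqP vE; subst v.
      by exists y; rewrite // inE exy (subsetP AS) // defA !inE eqxx orbT.
    by exists x; rewrite 1?setUC // inE e_sym exy (subsetP AS) // defA !inE eqxx.
  rewrite eA /=; apply/orP; left; apply/subsetP => z zA.
  by rewrite !inE (subsetP AS) // andbT; apply: contraNneq vA => <-.
apply: leq_trans (subset_leq_card sub) _.
by rewrite (leq_trans (leq_card_setU _ _)) // leq_add2l leq_imset_card.
Qed.

Hypothesis e_irr : irreflexive e.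

Lemma card_nbr_within (S : {set T}) v : #|[set w in S | e v w]| <= #|S :\ v|.
Proof.
apply/subset_leq_card/subsetP => w; rewrite !inE => /andP[-> evw].
by rewrite andbT; apply: contraTneq evw => ->; rewrite e_irr.
Qed.

End EdgesWithin.

Definition minimal_in (T : finType) (le : rel T) (S : {set T}) (v : T) :=
  forall x, x \in S -> le x v -> x = v.

Lemma exists_minimal (T : finType) (le : rel T) (S : {set T}) :
  partial_order le -> S != set0 -> exists2 v, v \in S & minimal_in le S v.
Proof.
move=> [le_refl [le_anti le_trans]] /set0Pn[v0 v0S].
pose below v := #|[set y in S | le y v]|.
have [v vS v_min] := arg_minnP below v0S.
exists v => // x xS le_xv; apply: le_anti => //.
move: (v_min x xS); apply: contraTT => nle_vx; rewrite -ltnNge.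
apply/proper_card/properP; split.
  by apply/subsetP => y; rewrite !inE => /andP[-> /le_trans->].
by exists v; rewrite !inE ?le_refl ?(negbTE nle_vx) ?andbT ?andbF.
Qed.

Section CausalFlowBound.
Variables (T : finType) (e : rel T) (I O : {set T}) (f : T -> T) (le : rel T).
Hypotheses (e_sym : symmetric e) (e_irr : irreflexive e).
Hypothesis flow : is_causal_flow e I O f le.

Lemma flow_edge x : x \notin O -> e x (f x).
Proof. by case/flow.2. Qed.

Lemma flow_le x : x \notin O -> le x (f x).
Proof. by case/flow.2. Qed.

Lemma flow_nbr x y : x \notin O -> e y (f x) -> le x y.
Proof. by case/flow.2 => _ _ _; apply. Qed.

Lemma flow_inj : {in ~: O &, injective f}.
Proof.
have [_ [le_anti _]] := flow.1.
move=> x y; rewrite !inE => xO yO fxy.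
by apply: le_anti; apply: flow_nbr => //; [rewrite fxy | rewrite -fxy]; apply: flow_edge.
Qed.

Definition flow_closed (S : {set T}) := {in S, forall x, x \notin O -> f x \in S}.

Lemma card_unflowed S : flow_closed S -> #|S :\: f @: (S :\: O)| = #|O :&: S|.
Proof.
move=> closedS.
have fS : f @: (S :\: O) \subset S.
  by apply/subsetP => _ /imsetP[x /setDP[xS xO] ->]; apply: closedS.
have card_f : #|f @: (S :\: O)| = #|S :\: O|.
  by apply: card_in_imset => x y /setDP[_ xO] /setDP[_ yO]; apply: flow_inj; rewrite inE.
rewrite cardsD (setIidPr fS) card_f setIC; have := cardsID O S; lia.
Qed.

Lemma minimal_unflowed S v : minimal_in le S v -> v \notin f @: (S :\: O).
Proof.
move=> v_min; apply/imsetP => -[x /setDP[xS xO] vE].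
have xv : x = v by apply: v_min; rewrite // vE flow_le.
by move: (flow_edge xO); rewrite -vE xv e_irr.
Qed.

Lemma flow_closedD1 S v : flow_closed S -> minimal_in le S v -> flow_closed (S :\ v).
Proof.
move=> closedS v_min x /setD1P[xv xS] xO; rewrite !inE closedS // andbT.
by apply: contra_neq xv => fxv; apply: v_min; rewrite // -fxv flow_le.
Qed.

Lemma card_nbr_minimal S v : flow_closed S -> v \in S -> v \notin O ->
  minimal_in le S v -> #|[set w in S | e v w]| <= #|O :&: S|.
Proof.
move=> closedS vS vO v_min.
pose U := S :\: f @: (S :\: O).
have vU : v \in U by rewrite inE vS andbT minimal_unflowed.
have nbr_sub : [set w in S | e v w] \subset f v |: (U :\ v).
  apply/subsetP => w; rewrite !inE => /andP[wS evw].
  have [//|wfv] := eqVneq w (f v); rewrite wS andbT.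
  have -> /= : w != v by apply: contraTneq evw => ->; rewrite e_irr.
  apply/imsetP => -[x /setDP[xS xO] wE].
  have xv : x = v by apply: v_min => //; apply: flow_nbr; rewrite // -wE.
  by move: wfv; rewrite wE xv eqxx.
apply: leq_trans (subset_leq_card nbr_sub) _.
rewrite -card_unflowed // (cardsD1 v U) vU.
by rewrite cardsU1 leq_add2r leq_b1.
Qed.

Lemma card_edges_within_closed S : flow_closed S ->
  #|edges_within e S| + 'C(#|O :&: S|.+1, 2) <= #|O :&: S| * #|S|.
Proof.
move cardS: #|S| => m; elim: m S cardS => [|m IH] S cardS closedS.
  have -> : S = set0 by apply/eqP; rewrite -cards_eq0 cardS.
  by rewrite edges_within0 setI0 !cards0.
have [v vS v_min] : exists2 v, v \in S & minimal_in le S v.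
  by apply: exists_minimal flow.1 _; rewrite -card_gt0 cardS.
have cardSv : #|S :\ v| = m by move: cardS; rewrite (cardsD1 v) vS => -[].
have IHv := IH _ cardSv (flow_closedD1 closedS v_min).
have edges_split := card_edges_withinD1 e_sym vS.
have cardOS := cardsD1 v (O :&: S); rewrite setIDA in IHv.
have binSk k : 'C(k.+2, 2) = 'C(k.+1, 2) + k.+1 by rewrite binS bin1.
have [vO|vO] := boolP (v \in O).
- have deg := card_nbr_within e_irr S v.
  rewrite inE vO vS add1n in cardOS; rewrite cardOS binSk.
  rewrite cardSv in deg; lia.
- have deg := card_nbr_minimal closedS vS vO v_min.
  rewrite inE (negbTE vO) add0n in cardOS; rewrite -cardOS in IHv; lia.
Qed.

End CausalFlowBound.

Lemma causal_flow_edge_bound (T : finType) (e : rel T) (I O : {set T}) :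
  simple_graph e -> has_causal_flow e I O ->
  #|edges e| + 'C(#|O|.+1, 2) <= #|O| * #|T|.
Proof.
move=> [e_sym e_irr] [f [le flow]].
have := card_edges_within_closed e_sym e_irr flow (S := [set: T]).
by rewrite edges_withinT setIT cardsT; apply=> x _ _; rewrite inE.
Qed.

Lemma nth_leq_sumn (s : seq nat) i : nth 0 s i <= sumn s.
Proof.
by elim: s i => [|x s IH] [|i] //=; rewrite ?leq_addr // (leq_trans (IH i)) ?leq_addl.
Qed.

Lemma sum_nat_interval m n lo hi :
  \sum_(m <= b < n) ((lo <= b) && (b <= hi) : nat) = minn n hi.+1 - maxn m lo.
Proof.
elim: n => [|n IH]; first by rewrite big_geq.
have [mn|nm] := leqP m n; first by rewrite big_nat_recr //= IH; lia.
by rewrite big_geq //; lia.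
Qed.

Lemma sum_upper_triangular (c : nat -> nat -> nat) (w : nat -> nat) n :
  (forall i, i < n -> c i i + 1 = w i) ->
  (forall i j, i < j < n -> c i j + 1 = w i + w j) ->
  (forall i j, j < i -> c i j = 0) ->
  \sum_(i < n) \sum_(j < n) c i j + 'C(n.+1, 2) = n * \sum_(i < n) w i.
Proof.
elim: n => [|n IH] c_diag c_lt c_gt; first by rewrite !big_ord0.
have IHn : \sum_(i < n) \sum_(j < n) c i j + 'C(n.+1, 2) = n * \sum_(i < n) w i.
  by apply: IH => // [i | i j] lt_n; [apply: c_diag | apply: c_lt]; lia.
have col : \sum_(i < n) c i n + n = \sum_(i < n) w i + n * w n.
  transitivity (\sum_(i < n) (c i n + 1)).
    by rewrite big_split /= sum_nat_const card_ord muln1.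
  rewrite (eq_bigr (fun i : 'I_n => w i + w n)) => [|i _]; last first.
    by apply: c_lt; rewrite ltn_ord ltnSn.
  by rewrite big_split /= sum_nat_const card_ord.
have row : \sum_(j < n) c n j = 0 by rewrite big1 // => j _; apply: c_gt.
have := c_diag n (ltnSn n).
rewrite !big_ord_recr /= row.
rewrite (eq_bigr (fun i : 'I_n => \sum_(j < n) c i j + c i n)) => [|i _]; last first.
  by rewrite big_ord_recr.
rewrite big_split /= binS bin1.
set A := \sum_(i < n) \sum_(j < n) c i j in IHn *.
set B := \sum_(i < n) w i in IHn col *.
set C := \sum_(i < n) c i n in col *.
lia.
Qed.

Lemma card_edges_orientation (T : finType) (d : rel T) :
  (forall x y, d x y -> ~~ d y x) ->
  #|edges (fun x y => d x y || d y x)| = #|[set p : T * T | d p.1 p.2]|.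
Proof.
move=> d_asym.
have d_irr x : ~~ d x x by apply/negP => dxx; move: (d_asym _ _ dxx); rewrite dxx.
have -> : edges (fun x y => d x y || d y x) =
    [set [set p.1; p.2] | p in [set p : T * T | d p.1 p.2]].
  apply/setP => A; rewrite inE; apply/existsP/imsetP.
    case=> x /existsP[y /andP[/orP[dxy|dyx] /eqP ->]].
      by exists (x, y); rewrite ?inE.
    by exists (y, x); rewrite ?inE // setUC.
  case=> -[x y]; rewrite inE /= => dxy ->.
  by exists x; apply/existsP; exists y; rewrite dxy eqxx.
apply: card_in_imset => -[x y] [x' y']; rewrite !inE /= => dxy dxy' E.
have /set2P[] : x \in [set x'; y'] by rewrite -E set21.
all: have /set2P[] : y \in [set x'; y'] by rewrite -E set22.
all: move=> ey ex; subst; rewrite ?(negbTE (d_irr _)) // in dxy.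
by move: (d_asym _ _ dxy); rewrite dxy'.
Qed.

Definition rank_le (T : eqType) (r : T -> nat) : rel T := fun x y => (x == y) || (r x < r y).

Lemma rank_le_partial_order (T : finType) (r : T -> nat) : partial_order (rank_le r).
Proof.
split; first by move=> x; rewrite /rank_le eqxx.
split=> [x y|y x z]; rewrite /rank_le.
  by case: eqVneq => //= _ lt_xy; rewrite ltnNge ltnW.
case: (eqVneq x y) => [->|_] //= lt_xy; case: eqVneq => [<-|_] /=; rewrite ?lt_xy ?orbT //.
by move=> lt_yz; rewrite (ltn_trans lt_xy lt_yz) orbT.
Qed.

Section Construction.
Variable ns : seq nat.
Local Notation k := (size ns).
Local Notation nu i := (nth 0 ns i).

Definition gdir (i a j b : nat) : bool :=
  ((i == j) && (b == a.+1))
  || ((i < j) &&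
      [|| [&& 1 < nu i, a == b, 1 <= a & a < nu i],
          [&& 1 < nu j, a == b.+1, 1 <= b & b < nu i]
        | [&& a == nu i, nu i <= b & b <= nu j]]).

Lemma gadj_dirE (x y : gvert ns) : gadj_dir x y = gdir (row x) (pos x) (row y) (pos y).
Proof. by []. Qed.

Lemma gdir_gt i j a b : j < i -> gdir i a j b = false.
Proof. by move=> ji; rewrite /gdir (gtn_eqF ji) ltnNge ltnW. Qed.

Lemma gdir_self i a b : gdir i a i b = (a.+1 <= b) && (b <= a.+1).
Proof. by rewrite /gdir eqxx ltnn orbF -eqn_leq eq_sym. Qed.

Lemma gdir_lt i j a b : i < j -> nu i <= nu j -> 1 <= a <= nu i -> 1 <= b <= nu j ->
  (gdir i a j b : nat) =
    (a < nu i) * ((a <= b) && (b <= a)) + (1 < a) * ((a.-1 <= b) && (b <= a.-1))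
    + (a == nu i) * ((nu i <= b) && (b <= nu j)).
Proof. by move=> ij; rewrite /gdir ij (ltn_eqF ij) /=; lia. Qed.

Lemma sum_gdir_self i : 0 < nu i ->
  \sum_(1 <= a < (nu i).+1) \sum_(1 <= b < (nu i).+1) gdir i a i b = (nu i).-1.
Proof.
move=> nu_pos.
transitivity (\sum_(1 <= a < (nu i).+1) ((1 <= a) && (a <= (nu i).-1) : nat)).
  apply: eq_big_nat => a a_range.
  under eq_bigr do rewrite gdir_self.
  by rewrite sum_nat_interval; lia.
by rewrite sum_nat_interval; lia.
Qed.

Lemma sum_gdir_lt i j : i < j -> 0 < nu i <= nu j ->
  \sum_(1 <= a < (nu i).+1) \sum_(1 <= b < (nu j).+1) gdir i a j b = (nu i + nu j).-1.
Proof.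
move=> ij /andP[nu_pos nu_le].
transitivity (\sum_(1 <= a < (nu i).+1)
    (((1 <= a) && (a <= (nu i).-1)) + ((2 <= a) && (a <= nu i))
     + ((nu i <= a) && (a <= nu i)) * (nu j - nu i).+1)).
  apply: eq_big_nat => a; rewrite ltnS => a_range.
  under eq_big_nat => b b_range do rewrite (gdir_lt ij nu_le a_range b_range).
  by rewrite !big_split /= -!big_distrr /= !sum_nat_interval; lia.
by rewrite !big_split /= -big_distrl /= !sum_nat_interval; nia.
Qed.

Lemma sum_gvert (F : nat -> nat -> nat) :
  \sum_(x : gvert ns) F (row x) (pos x) =
  \sum_(i < k) \sum_(1 <= a < (nu i).+1) F i a.
Proof.
transitivity (\sum_(p | gvert_pred ns p) F p.1 p.2).
  rewrite [RHS](reindex_omap (val : gvert ns -> _) insub) => [|p p_pred]; last first.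
    by rewrite insubT.
  by apply: eq_bigl => x; rewrite valP valK eqxx.
transitivity (\sum_(i < k) \sum_(a < (sumn ns).+1 | 1 <= a <= nu i) F i a).
  by rewrite pair_big_dep.
apply: eq_bigr => i _.
by rewrite big_geq_mkord (big_ord_widen_cond (sumn ns).+1) ?ltnS ?nth_leq_sumn.
Qed.

Lemma card_gadj_dir :
  #|[set p : gvert ns * gvert ns | gadj_dir p.1 p.2]| =
  \sum_(i < k) \sum_(1 <= a < (nu i).+1) \sum_(j < k) \sum_(1 <= b < (nu j).+1)
    gdir i a j b.
Proof.
transitivity (\sum_(x : gvert ns) \sum_(y : gvert ns) (gadj_dir x y : nat)).
  by rewrite pair_bigA -sum1dep_card big_mkcond.
rewrite -(sum_gvert (fun i a => \sum_(j < k) \sum_(1 <= b < (nu j).+1) gdir i a j b)).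
by apply: eq_bigr => x _; exact: (sum_gvert (gdir (row x) (pos x))).
Qed.

Lemma gdir_shape i a j b : gdir i a j b -> (i < j) || (i == j) && (b == a.+1).
Proof. by case/orP=> [->|/andP[-> _]]; rewrite ?orbT. Qed.

Lemma gadj_dir_asym (x y : gvert ns) : gadj_dir x y -> ~~ gadj_dir y x.
Proof.
rewrite !gadj_dirE => /gdir_shape shape_xy; apply/negP => /gdir_shape; lia.
Qed.

Lemma card_edges_gadj : all (fun m => 0 < m) ns -> sorted leq ns ->
  #|edges (gadj ns)| + 'C(k.+1, 2) = k * sumn ns.
Proof.
move=> pos_ns sorted_ns.
have nu_pos i : i < k -> 0 < nu i by move=> lt_ik; apply: (all_nthP 0 pos_ns).
have nu_mono i j : i < j < k -> nu i <= nu j.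
  case/andP=> lt_ij lt_jk; apply: (sorted_ltn_nth leq_trans) => //.
  by rewrite inE (ltn_trans lt_ij).
rewrite card_edges_orientation ?card_gadj_dir; last exact: gadj_dir_asym.
rewrite (eq_bigr (fun i : 'I_k => \sum_(j < k) \sum_(1 <= a < (nu i).+1)
    \sum_(1 <= b < (nu j).+1) gdir i a j b)) => [|i _]; last exact: exchange_big.
rewrite sumnE (big_nth 0) big_mkord.
apply: (sum_upper_triangular
  (c := fun i j => \sum_(1 <= a < (nu i).+1) \sum_(1 <= b < (nu j).+1) gdir i a j b))
  => [i lt_ik | i j lt_ijk | i j lt_ji].
- by rewrite sum_gdir_self ?addn1 ?prednK ?nu_pos.
- have [lt_ij lt_jk] := andP lt_ijk.
  have pos_i : 0 < nu i by rewrite nu_pos ?(ltn_trans lt_ij).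
  by rewrite sum_gdir_lt ?pos_i ?nu_mono //; lia.
- by rewrite big1 // => a _; rewrite big1 // => b _; rewrite gdir_gt.
Qed.

Lemma gvert_inj (x y : gvert ns) : row x = row y -> pos x = pos y -> x = y.
Proof.
rewrite /row /pos => eq_row eq_pos; apply: val_inj.
by case: (val x) (val y) eq_row eq_pos => [i a] [j b] /= /val_inj-> /val_inj->.
Qed.

Lemma gvert_bounds (x : gvert ns) :
  [/\ row x < k, 1 <= pos x, pos x <= nu (row x) & nu (row x) <= sumn ns].
Proof. by have /andP[? ?] := valP x; split; rewrite ?ltn_ord ?nth_leq_sumn. Qed.

Definition gsucc (v : gvert ns) : gvert ns := insubd v ((val v).1, inord (pos v).+1).

Lemma gsuccE v : v \notin gO ns -> row (gsucc v) = row v /\ pos (gsucc v) = (pos v).+1.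
Proof.
rewrite inE => vO; have [_ _ pos_le nu_le] := gvert_bounds v.
have lt_pos : (pos v).+1 <= sumn ns by rewrite (leq_trans _ nu_le) // ltn_neqAle vO.
have succ_pred : gvert_pred ns ((val v).1, inord (pos v).+1).
  by rewrite /gvert_pred /= inordK ?ltnS // ltn_neqAle vO.
by rewrite /gsucc /row /pos insubdK //= inordK ?ltnS.
Qed.

Definition flow_rank (v : gvert ns) : nat :=
  if v \in gO ns then (sumn ns).+1 * k else pos v * k + row v.

Lemma gadj_gsucc_lex x y : x \notin gO ns -> y \notin gO ns -> y != x ->
  gadj ns y (gsucc x) -> pos x < pos y \/ pos x = pos y /\ row x < row y.
Proof.
move=> xO yO yx; have [row_s pos_s] := gsuccE xO.
have neq_xy : ~ (row y = row x /\ pos y = pos x).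
  by case=> eq_row eq_pos; move: yx; rewrite (gvert_inj eq_row eq_pos) eqxx.
move: yO; rewrite inE /gadj !gadj_dirE row_s pos_s /gdir; lia.
Qed.

Lemma gadj_causal_flow : has_causal_flow (gadj ns) (gI ns) (gO ns).
Proof.
exists gsucc, (rank_le flow_rank); split; first exact: rank_le_partial_order.
move=> x xO; have [row_s pos_s] := gsuccE xO.
have [row_x pos_x pos_le nu_le] := gvert_bounds x.
have rank_x : flow_rank x = pos x * k + row x by rewrite /flow_rank (negbTE xO).
split.
- by rewrite inE pos_s eqSS -lt0n.
- by rewrite /gadj gadj_dirE row_s pos_s /gdir !eqxx.
- apply/orP; right; rewrite rank_x /flow_rank; case: ifP => _; rewrite ?row_s ?pos_s; nia.
- move=> y adj_y; rewrite /rank_le; have [//|yx /=] := eqVneq y x.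
  rewrite rank_x /flow_rank.
  have [row_y _ pos_y _] := gvert_bounds y.
  case: ifPn => yO; first nia.
  have := gadj_gsucc_lex xO yO yx adj_y; nia.
Qed.

End Construction.

Theorem theorem2 :
  (forall (T : finType) (e : rel T) (I O : {set T}),
      simple_graph e -> has_causal_flow e I O ->
      #|edges e| <= #|O| * #|T| - 'C(#|O|.+1, 2))
  /\
  (forall (n k : nat) (ns : seq nat),
      1 <= k -> k <= n ->
      size ns = k -> all (fun m => 0 < m) ns -> sorted leq ns -> sumn ns = n ->
      has_causal_flow (gadj ns) (gI ns) (gO ns) /\
      #|edges (gadj ns)| = k * n - 'C(k.+1, 2)).
Proof.
split=> [T e I O simple_e flow_e | n k ns _ _ size_ns pos_ns sorted_ns sum_ns].
  by have := causal_flow_edge_bound simple_e flow_e; lia.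
split; first exact: gadj_causal_flow.
by subst k n; have := card_edges_gadj pos_ns sorted_ns; lia.
Qed.
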